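(* Let $V\in(\mathbb{R}\cup\{-\infty\})^{n\times p}$ have no row and no column identically equal to $-\infty$, and $E=\{(i,k):V_{ik}\neq-\infty\}$. The operator $$T_i(x)=\inf_{k\in[p],\,(i,k)\in E}\Big[-V_{ik}+\max_{j\in[n],\,j\neq i}(V_{jk}+x_j)\Big],\qquad i\in[n],$$ can be evaluated at any point $x$ in $O(|E|)$ arithmetic operations.
   Context: $-\infty+c=-\infty$, $\max\emptyset=-\infty$. *)

From HB Require Import structures.
From mathcomp Require Import all_boot all_order all_algebra.
From mathcomp Require Import all_classical all_reals.
From mathcomp Require Import ereal.
Set Implicit Arguments. Unset Strict Implicit. Unset Printing Implicit Defensive.
Import Order.TTheory GRing.Theory Num.Theory.
Local Open Scope ring_scope.
Local Open Scope ereal_scope.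

Definition Top (R : realType) (n p : nat) (V : 'M[\bar R]_(n, p))
    (x : 'I_n -> R) (i : 'I_n) : \bar R :=
  \big[Order.min/+oo]_(k < p | V i k != -oo)
     (- V i k + \big[Order.max/-oo]_(j < n | j != i) (V j k + (x j)%:E)).

Definition supp (R : realType) (n p : nat) (V : 'M[\bar R]_(n, p)) :
    {set 'I_n * 'I_p} := [set ik | V ik.1 ik.2 != -oo].

Definition no_minf_row (R : realType) (n p : nat) (V : 'M[\bar R]_(n, p)) :=
  forall i : 'I_n, exists k : 'I_p, V i k != -oo.
Definition no_minf_col (R : realType) (n p : nat) (V : 'M[\bar R]_(n, p)) :=
  forall k : 'I_p, exists i : 'I_n, V i k != -oo.

(* Cost model: straight-line programs over \bar R.  Each instruction is one
   arithmetic operation (constants and input loads are also counted, which is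
   only conservative).  Register r holds the value of the r-th instruction;
   operands refer to registers by index (out-of-range / forward references
   read -oo). *)
Inductive instr (R : realType) (n : nat) : Type :=
  | ICst of \bar R
  | IInp of 'I_n
  | IAdd of nat & nat
  | IOpp of nat
  | IMax of nat & nat
  | IMin of nat & nat.

Definition eval_instr (R : realType) (n : nat) (x : 'I_n -> R)
    (regs : seq (\bar R)) (ins : instr R n) : \bar R :=
  let rd a := nth -oo regs a in
  match ins with
  | ICst c => c
  | IInp j => (x j)%:E
  | IAdd a b => rd a + rd b
  | IOpp a => - rd a
  | IMax a b => Order.max (rd a) (rd b)
  | IMin a b => Order.min (rd a) (rd b)
  end.

Definition run (R : realType) (n : nat) (x : 'I_n -> R) (prog : seq (instr R n))
    : seq (\bar R) :=
  foldl (fun regs ins => rcons regs (eval_instr x regs ins)) [::] prog.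

From HB Require Import structures.
From mathcomp Require Import all_boot all_order all_algebra.
From mathcomp Require Import all_classical all_reals.
From mathcomp Require Import ereal.
From mathcomp Require Import zify.
Set Implicit Arguments. Unset Strict Implicit. Unset Printing Implicit Defensive.
Local Open Scope ereal_scope.
Local Open Scope nat_scope.

(* Fix a column k with support c.  For i in c, the maximum of V j k + x_j over
   j in c, j <> i, is the maximum of a prefix and a suffix of the sequence
   (V j k + x_j)_(j in c); all prefix and suffix maxima cost O(|c|) operations,
   after which each term -V i k + max(...) of T_i costs O(1).  T_i is then a
   minimum over the k with V i k finite.  Entries equal to -oo contribute
   nothing to the maxima, and since no row or column is empty, the constant
   overhead per row and per column is absorbed in |E|: 12 |E| instructions
   suffice. *)

Section StraightLinePrograms.
Variables (R : realType) (n : nat) (x : 'I_n -> R).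
Local Notation instr := (instr R n).
Implicit Types (P Q W : seq instr) (ins : instr) (a b o : nat) (v : \bar R).

Definition prefix_prog P Q := exists W, Q = P ++ W.

Definition stores P a v := a < size P /\ nth -oo%E (run x P) a = v.

Lemma prefix_prog_refl P : prefix_prog P P.
Proof. by exists [::]; rewrite cats0. Qed.

Lemma prefix_prog_trans P Q W : prefix_prog P Q -> prefix_prog Q W -> prefix_prog P W.
Proof. by move=> [U ->] [U' ->]; exists (U ++ U'); rewrite catA. Qed.

Lemma prefix_prog_cat P W : prefix_prog P (P ++ W).
Proof. by exists W. Qed.

Lemma prefix_prog_rcons P ins : prefix_prog P (rcons P ins).
Proof. by rewrite -cats1; apply: prefix_prog_cat. Qed.

Lemma run_rcons P ins : run x (rcons P ins) = rcons (run x P) (eval_instr x (run x P) ins).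
Proof. by rewrite /run foldl_rcons. Qed.

Lemma size_run P : size (run x P) = size P.
Proof. by elim/last_ind: P => // P ins IH; rewrite run_rcons !size_rcons IH. Qed.

Lemma run_prefix P Q : prefix_prog P Q -> exists U, run x Q = run x P ++ U.
Proof.
move=> [W ->]; elim/last_ind: W => [|W ins [U IH]]; first by exists [::]; rewrite !cats0.
exists (rcons U (eval_instr x (run x (P ++ W)) ins)).
by rewrite -rcons_cat run_rcons IH rcons_cat.
Qed.

Lemma stores_prefix P Q a v : prefix_prog P Q -> stores P a v -> stores Q a v.
Proof.
move=> PQ [aP <-]; rewrite /stores; have [U ->] := run_prefix PQ; rewrite nth_cat size_run aP.
by have [W ->] := PQ; rewrite size_cat ltn_addr.
Qed.

Lemma stores_rcons P ins : stores (rcons P ins) (size P) (eval_instr x (run x P) ins).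
Proof. by rewrite /stores run_rcons nth_rcons size_run size_rcons ltnn eqxx. Qed.

Lemma stores_binop P (mk : nat -> nat -> instr) (f : \bar R -> \bar R -> \bar R) a b u w :
  (forall regs, eval_instr x regs (mk a b) = f (nth -oo%E regs a) (nth -oo%E regs b)) ->
  stores P a u -> stores P b w -> stores (rcons P (mk a b)) (size P) (f u w).
Proof. by move=> mkE [_ <-] [_ <-]; rewrite -mkE; apply: stores_rcons. Qed.

Lemma prefix_prog_foldl (I : Type) (f : seq instr -> I -> seq instr) :
  (forall Q j, prefix_prog Q (f Q j)) -> forall s P, prefix_prog P (foldl f P s).
Proof.
move=> fP; elim=> [|j s IH] P /=; first exact: prefix_prog_refl.
exact: prefix_prog_trans (fP P j) (IH _).
Qed.

Lemma prefix_prog_foldl_index (I : eqType) (f : seq instr -> I -> seq instr) s P j :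
  (forall Q j, prefix_prog Q (f Q j)) -> j \in s ->
  prefix_prog (f (foldl f P (take (index j s) s)) j) (foldl f P s).
Proof.
move=> fP js; rewrite -[in X in prefix_prog _ X](cat_take_drop (index j s) s).
rewrite (drop_nth j) ?index_mem // nth_index // foldl_cat /=.
exact: prefix_prog_foldl.
Qed.

Lemma size_foldl (I : Type) (f : seq instr -> I -> seq instr) (g : I -> nat) :
  (forall Q j, size (f Q j) = size Q + g j) ->
  forall s P, size (foldl f P s) = size P + \sum_(j <- s) g j.
Proof.
move=> fS; elim=> [|j s IH] P /=; first by rewrite big_nil addn0.
by rewrite IH fS big_cons addnA.
Qed.

(* The accumulator is always the last register. *)
Definition push_fold (mk : nat -> nat -> instr) (idx : \bar R) (addrs : seq nat) P :=
  foldl (fun Q a => rcons Q (mk (size Q).-1 a)) (rcons P (ICst n idx)) addrs.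

Lemma size_push_fold mk idx addrs P :
  size (push_fold mk idx addrs P) = size P + (size addrs).+1.
Proof.
rewrite /push_fold (@size_foldl _ _ (fun=> 1)) => [|Q a]; last by rewrite size_rcons addn1.
by rewrite size_rcons sum1_size addSnnS.
Qed.

Lemma prefix_push_fold mk idx addrs P : prefix_prog P (push_fold mk idx addrs P).
Proof.
apply: prefix_prog_trans (prefix_prog_rcons _ _) (prefix_prog_foldl _ _ _) => Q a.
exact: prefix_prog_rcons.
Qed.

Lemma push_foldP (idx : \bar R) (op : Monoid.law idx) mk (I : eqType) (s : seq I)
    (addr : I -> nat) (F : I -> \bar R) P :
  (forall regs a b, eval_instr x regs (mk a b) = op (nth -oo%E regs a) (nth -oo%E regs b)) ->
  (forall j, j \in s -> stores P (addr j) (F j)) ->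
  forall t, t <= size s ->
  stores (push_fold mk idx (map addr s) P) (size P + t) (\big[op/idx]_(j <- take t s) F j).
Proof.
move=> mkE; elim/last_ind: s => [|s j IH] sP t.
  by rewrite leqn0 => /eqP ->; rewrite addn0 big_nil; apply: stores_rcons.
have {IH}/IH IH : forall i, i \in s -> stores P (addr i) (F i).
  by move=> i si; apply: sP; rewrite mem_rcons inE si orbT.
rewrite map_rcons /push_fold foldl_rcons -/(push_fold _ _ _ _) size_push_fold size_map.
rewrite addnS /= size_rcons leq_eqVlt => /orP [/eqP ->|ts]; last first.
  rewrite -[rcons s j]cats1 takel_cat //.
  exact: stores_prefix (prefix_prog_rcons _ _) (IH _ ts).
rewrite -[(size s).+1](size_rcons s j) take_size big_rcons /= size_rcons.
rewrite -[in X in stores _ X](size_map addr) -(size_push_fold mk idx).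
apply: (stores_binop (fun regs => mkE regs _ _)).
  by have := IH _ (leqnn _); rewrite take_size.
by apply: stores_prefix (prefix_push_fold _ _ _ _) (sP j _); rewrite mem_rcons mem_head.
Qed.

Definition push_blocks (I : Type) (blk : nat -> I -> seq instr) (s : seq I) P :=
  foldl (fun Q j => Q ++ blk (size Q) j) P s.

Lemma prefix_push_blocks (I : Type) (blk : nat -> I -> seq instr) s P :
  prefix_prog P (push_blocks blk s P).
Proof. by apply: prefix_prog_foldl => Q j; apply: prefix_prog_cat. Qed.

Lemma size_push_blocks (I : Type) (blk : nat -> I -> seq instr) sz s P :
  (forall o j, size (blk o j) = sz) -> size (push_blocks blk s P) = size P + sz * size s.
Proof.
move=> blkS; rewrite /push_blocks (@size_foldl _ _ (fun=> sz)) => [|Q j]; last first.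
  by rewrite size_cat blkS.
by rewrite big_const_seq count_predT iter_addn_0 mulnC.
Qed.

Lemma push_blocksP (I : eqType) (blk : nat -> I -> seq instr) sz d s (F : I -> \bar R) P :
  (forall o j, size (blk o j) = sz) ->
  (forall Q j, prefix_prog P Q -> j \in s ->
     stores (Q ++ blk (size Q) j) (size Q + d) (F j)) ->
  forall j, j \in s -> stores (push_blocks blk s P) (size P + sz * index j s + d) (F j).
Proof.
move=> blkS blkP j js; set Q := push_blocks blk (take (index j s) s) P.
have <- : size Q = size P + sz * index j s.
  by rewrite (size_push_blocks _ _ blkS) size_take index_mem js.
pose step Q' j' := Q' ++ blk (size Q') j'.
have step_prefix Q' j' : prefix_prog Q' (step Q' j') by apply: prefix_prog_cat.
apply: (stores_prefix (prefix_prog_foldl_index P step_prefix js)).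
exact: blkP (prefix_prog_foldl step_prefix _ _) js.
Qed.

Definition shift_code (c : \bar R) ins o := [:: ICst n c; ins; IAdd R n o o.+1].

Lemma size_shift_code c ins o : size (shift_code c ins o) = 3.
Proof. by []. Qed.

Lemma stores_shift_code Q c ins v :
  stores (rcons (rcons Q (ICst n c)) ins) (size (rcons Q (ICst n c))) v ->
  stores (Q ++ shift_code c ins (size Q)) (size Q + 2) (c + v)%E.
Proof.
move=> insP; set Q1 := rcons Q (ICst n c); set Q2 := rcons Q1 ins.
have -> : Q ++ shift_code c ins (size Q) = rcons Q2 (IAdd R n (size Q) (size Q1)).
  by rewrite /Q2 /Q1 size_rcons -!cats1 -!catA.
have -> : size Q + 2 = size Q2 by rewrite !size_rcons addn2.
apply: (stores_binop (f := fun u w => (u + w)%E)) insP => //.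
exact: stores_prefix (prefix_prog_rcons _ _) (stores_rcons _ _).
Qed.

End StraightLinePrograms.

Lemma big_rem_take_rev (T : Type) (idx : T) (op : Monoid.com_law idx) (I : eqType)
    (s : seq I) (F : I -> T) i : uniq s -> i \in s ->
  \big[op/idx]_(j <- s | j != i) F j =
  op (\big[op/idx]_(j <- take (index i s) s) F j)
     (\big[op/idx]_(j <- take (size s - (index i s).+1) (rev s)) F j).
Proof.
move=> us si; rewrite take_rev subKn ?index_mem // big_rev -big_cat -remE rem_filter //.
by rewrite big_filter.
Qed.

Section Operator.
Variables (R : realType) (n p : nat) (V : 'M[\bar R]_(n, p)).
Local Notation instr := (instr R n).
Implicit Types (P Q : seq instr) (x : 'I_n -> R) (i j : 'I_n) (k : 'I_p).

Definition col_supp k := [seq j <- index_enum 'I_n | V j k != -oo%E].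
Definition row_supp i := [seq k <- index_enum 'I_p | V i k != -oo%E].

Definition top_term x i k :=
  (- V i k + \big[Order.max/-oo]_(j < n | j != i) (V j k + (x j)%:E))%E.

Lemma mem_col_supp i k : (i \in col_supp k) = (V i k != -oo%E).
Proof. by rewrite mem_filter mem_index_enum andbT. Qed.

Lemma uniq_col_supp k : uniq (col_supp k).
Proof. by rewrite filter_uniq // index_enum_uniq. Qed.

Lemma big_max_col_supp x i k :
  \big[Order.max/-oo]_(j < n | j != i) (V j k + (x j)%:E)%E =
  \big[Order.max/-oo]_(j <- col_supp k | j != i) (V j k + (x j)%:E)%E.
Proof.
rewrite big_filter_cond big_mkcondl; apply: eq_bigr => j _.
by case: eqVneq => // ->.
Qed.

(* Registers from [o] on: the sums [V j k + x j], the maxima [pre_addr t] of the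
   first [t] sums, the maxima [suf_addr t] of the last [t] sums, and the terms
   [top_term x j k] for [j] in the support. *)
Definition col_code P k : seq instr :=
  let c := col_supp k in let m := size c in let o := size P in
  let sum_addr j := o + 3 * index j c + 2 in
  let pre_addr t := o + 3 * m + t in
  let suf_addr t := o + 4 * m + 1 + t in
  let max_except j := IMax R n (pre_addr (index j c)) (suf_addr (m - (index j c).+1)) in
  push_blocks (fun o' j => shift_code (- V j k) (max_except j) o') c
   (push_fold (IMax R n) -oo (map sum_addr (rev c))
   (push_fold (IMax R n) -oo (map sum_addr c)
   (push_blocks (fun o' j => shift_code (V j k) (IInp R j) o') c P))).

Definition col_out k i := 5 * size (col_supp k) + 4 + 3 * index i (col_supp k).

Lemma size_col_code P k : size (col_code P k) = size P + (8 * size (col_supp k) + 2).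
Proof.
rewrite /col_code (size_push_blocks _ _ (fun _ _ => size_shift_code _ _ _)) !size_push_fold.
by rewrite (size_push_blocks _ _ (fun _ _ => size_shift_code _ _ _)) !size_map size_rev; lia.
Qed.

Lemma col_codeP x P k i : V i k != -oo%E ->
  stores x (col_code P k) (size P + col_out k i) (top_term x i k).
Proof.
move=> Vik; rewrite /col_code /col_out.
set c := col_supp k; set m := size c; set o := size P.
set P1 := push_blocks _ c P; set P2 := push_fold _ _ _ P1; set P3 := push_fold _ _ _ P2.
have P1S : size P1 = o + 3 * m.
  by rewrite (size_push_blocks _ _ (fun _ _ => size_shift_code _ _ _)).
have P2S : size P2 = o + 4 * m + 1 by rewrite size_push_fold size_map P1S; lia.
have P3S : size P3 = o + 5 * m + 2 by rewrite size_push_fold size_map size_rev P2S; lia.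
have sumP j : j \in c -> stores x P1 (o + 3 * index j c + 2) (V j k + (x j)%:E)%E.
  apply: (push_blocksP (F := fun j => V j k + (x j)%:E)%E) => // Q j' _ _.
  exact/stores_shift_code/stores_rcons.
have preP t : t <= m ->
    stores x P2 (o + 3 * m + t) (\big[Order.max/-oo]_(j <- take t c) (V j k + (x j)%:E)%E).
  by rewrite -P1S; apply: push_foldP.
have sufP t : t <= m ->
    stores x P3 (o + 4 * m + 1 + t)
      (\big[Order.max/-oo]_(j <- take t (rev c)) (V j k + (x j)%:E)%E).
  move=> tm; rewrite -P2S; apply: push_foldP => [//|j|]; last by rewrite size_rev.
  by rewrite mem_rev => /sumP; apply/stores_prefix/prefix_push_fold.
have -> : o + (5 * m + 4 + 3 * index i c) = size P3 + 3 * index i c + 2 by rewrite P3S; lia.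
apply: (push_blocksP (F := fun j => top_term x j k)) => //; last by rewrite mem_col_supp.
move=> Q j P3Q jc.
rewrite /top_term big_max_col_supp (big_rem_take_rev _ _ (uniq_col_supp k) jc).
have P3Q' : prefix_prog P3 (rcons Q (ICst n (- V j k))).
  exact: prefix_prog_trans P3Q (prefix_prog_rcons _ _).
have jm : index j c < m by rewrite index_mem.
apply: stores_shift_code; apply: (stores_binop (f := Order.max)) => //.
  exact: stores_prefix (prefix_prog_trans (prefix_push_fold _ _ _ _) P3Q') (preP _ (ltnW jm)).
exact: stores_prefix P3Q' (sufP _ (leq_subr _ _)).
Qed.

Lemma prefix_col_code P k : prefix_prog P (col_code P k).
Proof.
apply: prefix_prog_trans (prefix_push_blocks _ _ _) _.
apply: prefix_prog_trans (prefix_push_fold _ _ _ _) _.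
exact: prefix_prog_trans (prefix_push_fold _ _ _ _) (prefix_push_blocks _ _ _).
Qed.

Definition col_prog := foldl col_code [::] (index_enum 'I_p).

Definition col_start k :=
  size (foldl col_code [::] (take (index k (index_enum 'I_p)) (index_enum 'I_p))).

Lemma col_progP x k i : V i k != -oo%E ->
  stores x col_prog (col_start k + col_out k i) (top_term x i k).
Proof.
move=> Vik; apply: stores_prefix (col_codeP _ _ Vik).
exact: prefix_prog_foldl_index _ prefix_col_code (mem_index_enum k).
Qed.

Definition row_code P i :=
  push_fold (IMin R n) +oo (map (fun k => col_start k + col_out k i) (row_supp i)) P.

Definition top_prog := foldl row_code col_prog (index_enum 'I_n).

Definition top_out i :=
  size (foldl row_code col_prog (take (index i (index_enum 'I_n)) (index_enum 'I_n)))
  + size (row_supp i).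

Lemma top_progP x i : stores x top_prog (top_out i) (Top V x i).
Proof.
have row_prefix Q i' : prefix_prog Q (row_code Q i') by apply: prefix_push_fold.
have -> : Top V x i =
    \big[Order.min/+oo]_(k <- take (size (row_supp i)) (row_supp i)) top_term x i k.
  by rewrite take_size big_filter.
apply: stores_prefix (prefix_prog_foldl_index _ row_prefix (mem_index_enum i)) _.
apply: push_foldP => // k; rewrite mem_filter => /andP [Vik _].
exact: stores_prefix (prefix_prog_foldl row_prefix _ _) (col_progP x Vik).
Qed.

Lemma sum_size_col_supp : \sum_k size (col_supp k) = \sum_i size (row_supp i).
Proof.
under eq_bigr => k _ do rewrite size_filter -sum1_count big_mkcond /=.
under [RHS]eq_bigr => i _ do rewrite size_filter -sum1_count big_mkcond /=.
exact: exchange_big.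
Qed.

Lemma card_supp : #|supp V| = \sum_i size (row_supp i).
Proof.
under eq_bigr => i _ do rewrite size_filter -sum1_count.
by rewrite pair_big_dep /= sum1_card; apply: eq_card => -[i k]; rewrite inE.
Qed.

Lemma size_top_prog : no_minf_row V -> no_minf_col V -> size top_prog <= 12 * #|supp V|.
Proof.
move=> rowV colV.
have row_pos i : 0 < size (row_supp i).
  have [k Vik] := rowV i; rewrite size_filter -has_count.
  by apply/hasP; exists k; first exact: mem_index_enum.
have col_pos k : 0 < size (col_supp k).
  have [i Vik] := colV k; rewrite size_filter -has_count.
  by apply/hasP; exists i; first exact: mem_index_enum.
rewrite /top_prog (size_foldl (g := fun i => (size (row_supp i)).+1)) => [|Q i]; last first.
  by rewrite size_push_fold size_map.
rewrite /col_prog (size_foldl (g := fun k => 8 * size (col_supp k) + 2)) => [|Q k]; last first.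
  exact: size_col_code.
rewrite add0n card_supp (mulnDl 10 2) leq_add //.
  by rewrite -sum_size_col_supp big_distrr /= leq_sum // => k _; have := col_pos k; lia.
by rewrite big_distrr /= leq_sum // => i _; have := row_pos i; lia.
Qed.

End Operator.

Local Open Scope ereal_scope.

Theorem proposition6p1 :
  exists C : nat,
    forall (R : realType) (n p : nat) (V : 'M[\bar R]_(n, p)),
      (forall i k, V i k != +oo) -> no_minf_row V -> no_minf_col V ->
      exists (prog : seq (instr R n)) (out : 'I_n -> nat),
        (size prog <= C * #|supp V|)%N /\
        forall (x : 'I_n -> R) (i : 'I_n),
          nth -oo (run x prog) (out i) = Top V x i.
Proof.
exists 12%N => R n p V _ rowV colV.
exists (top_prog V), (top_out V); split; first exact: size_top_prog.
by move=> x i; have [_ ->] := top_progP V x i.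
Qed.
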